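(* Let $(\Omega,d)$ be an $A$-uniform space with completion $\overline\Omega$, and let $a\in\partial\Omega=\overline\Omega\setminus\Omega$. Then $\overline\Omega\setminus\{a\}$ is locally annularly quasiconvex around $a$ with $\Lambda=4A$.
   Context: $A$-uniform: $(\Omega,d)$ noncomplete and any $x,y\in\Omega$ are joined by an arc-length parametrized curve $\gamma:[0,l]\to\Omega$ with $l\le A\,d(x,y)$ and $\operatorname{dist}(\gamma(t),\partial\Omega)\ge\frac1A\min\{t,l-t\}$. A metric space $Z$ is locally annularly quasiconvex around $x_0$ if there exist $\Lambda\ge2$ and $r_0>0$ such that for every $0<r\le r_0$, each pair of points $x,y\in B(x_0,2r)\setminus B(x_0,r)$ can be connected within $B(x_0,\Lambda r)\setminus B(x_0,r/\Lambda)$ by a curve of length at most $\Lambda d(x,y)$. *)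

From Stdlib Require Import Reals Lra List Sorting.Sorted.
Import ListNotations.
Open Scope R_scope.

Record MetricSpace := {
  mcar :> Type;
  mdist : mcar -> mcar -> R;
  mdist_refl : forall x, mdist x x = 0;
  mdist_sep : forall x y, mdist x y = 0 -> x = y;
  mdist_sym : forall x y, mdist x y = mdist y x;
  mdist_tri : forall x y z, mdist x z <= mdist x y + mdist y z
}.

Arguments mdist {m} _ _.

Definition cauchy_seq {X : MetricSpace} (u : nat -> X) : Prop :=
  forall eps, 0 < eps -> exists N, forall n m, (N <= n)%nat -> (N <= m)%nat ->
    mdist (u n) (u m) < eps.

Definition seq_converges_to {X : MetricSpace} (u : nat -> X) (p : X) : Prop :=
  forall eps, 0 < eps -> exists N, forall n, (N <= n)%nat -> mdist (u n) p < eps.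

Definition complete (X : MetricSpace) : Prop :=
  forall u : nat -> X, cauchy_seq u -> exists p, seq_converges_to u p.

Definition dense {X : MetricSpace} (Om : X -> Prop) : Prop :=
  forall x eps, 0 < eps -> exists y, Om y /\ mdist x y < eps.

Definition is_completion_of (X : MetricSpace) (Om : X -> Prop) : Prop :=
  complete X /\ dense Om.

Definition subspace_noncomplete {X : MetricSpace} (Om : X -> Prop) : Prop :=
  exists u : nat -> X, (forall n, Om (u n)) /\ cauchy_seq u /\
    ~ (exists p, Om p /\ seq_converges_to u p).

Definition partition (a b : R) (ts : list R) : Prop :=
  Sorted Rle ts /\ Forall (fun t => a <= t <= b) ts.

Fixpoint variation {X : MetricSpace} (g : R -> X) (ts : list R) : R :=
  match ts with
  | t1 :: ((t2 :: _) as rest) => mdist (g t1) (g t2) + variation g rest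
  | _ => 0
  end.

Definition curve_length {X : MetricSpace} (g : R -> X) (a b L : R) : Prop :=
  is_lub (fun v => exists ts, partition a b ts /\ v = variation g ts) L.

Definition arclength_param {X : MetricSpace} (g : R -> X) (l : R) : Prop :=
  forall s t, 0 <= s -> s <= t -> t <= l -> curve_length g s t (t - s).

Definition continuous_on_interval {X : MetricSpace} (g : R -> X) (a b : R) : Prop :=
  forall t, a <= t <= b -> forall eps, 0 < eps -> exists delta, 0 < delta /\
    forall s, a <= s <= b -> Rabs (s - t) < delta -> mdist (g s) (g t) < eps.

(* A-uniform, for Om viewed inside its completion X (boundary = X \ Om).
   "dist(g t, boundary) >= c" is written out as: every boundary point is at
   distance >= c. *)
Definition A_uniform (X : MetricSpace) (Om : X -> Prop) (A : R) : Prop :=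
  subspace_noncomplete Om /\
  forall x y, Om x -> Om y ->
    exists (g : R -> X) (l : R),
      0 <= l /\ g 0 = x /\ g l = y /\
      (forall t, 0 <= t <= l -> Om (g t)) /\
      arclength_param g l /\
      l <= A * mdist x y /\
      (forall t, 0 <= t <= l -> forall b, ~ Om b ->
          mdist (g t) b >= / A * Rmin t (l - t)).

Definition loc_ann_qc (X : MetricSpace) (Z : X -> Prop) (x0 : X) (Lambda : R) : Prop :=
  2 <= Lambda /\
  exists r0, 0 < r0 /\
  forall r, 0 < r -> r <= r0 ->
  forall x y, Z x -> Z y ->
    r <= mdist x0 x < 2 * r -> r <= mdist x0 y < 2 * r ->
    exists (g : R -> X) (L : R),
      continuous_on_interval g 0 1 /\ g 0 = x /\ g 1 = y /\
      (forall t, 0 <= t <= 1 ->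
         Z (g t) /\ r / Lambda <= mdist x0 (g t) < Lambda * r) /\
      curve_length g 0 1 L /\ L <= Lambda * mdist x y.

From Pilot Require Import Defs.
From Stdlib Require Import Reals Lra Lia List Sorting.Sorted ClassicalEpsilon.
Import ListNotations.
Open Scope R_scope.

(* Fix x, y in the annulus B(a,2r) \ B(a,r).
   Since Om is dense, x is the endpoint of a Lipschitz "tail" curve whose
   other points lie in Om: it is the infinite concatenation, over the dyadic
   intervals [2^-(n+1), 2^-n], of quasiconvex curves joining points p_(n+1),
   p_n of Om that converge to x fast.  The ends x0, y0 of the tails at x and
   y are joined by an A-uniform curve, and the path "tail at x, uniform curve,
   reversed tail at y" stays in the annulus B(a,4Ar) \ B(a,r/(4A)): points of
   a short tail are close to x or y, and a point of the uniform curve stays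
   away from a, either by the distance-to-boundary bound of A-uniformity (a is
   a boundary point) or because it is close to x0 or y0. *)

Lemma mdist_nonneg {X : MetricSpace} (x y : X) : 0 <= mdist x y.
Proof.
  pose proof (mdist_tri _ x y x) as H.
  rewrite mdist_refl, (mdist_sym _ y x) in H. lra.
Qed.

Lemma div_le_of_le_mul c x y : 0 < c -> x <= c * y -> x / c <= y.
Proof.
  intros Hc H. apply (Rmult_le_compat_r (/ c)) in H; [|left; apply Rinv_0_lt_compat; lra].
  replace (c * y * / c) with y in H by (field; lra). exact H.
Qed.

Definition Lip {X : MetricSpace} (f : R -> X) (a b K : R) : Prop :=
  forall s t, a <= s -> s <= t -> t <= b -> mdist (f s) (f t) <= K * (t - s).

Section Lipschitz.
Context {X : MetricSpace}.

Lemma Lip_mono (f : R -> X) a b K K' : K <= K' -> Lip f a b K -> Lip f a b K'.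
Proof.
  intros HK H s t h1 h2 h3. specialize (H s t h1 h2 h3).
  assert (K * (t - s) <= K' * (t - s)) by (apply Rmult_le_compat_r; lra). lra.
Qed.

Lemma Lip_ext (f g : R -> X) a b K :
  (forall t, a <= t <= b -> f t = g t) -> Lip f a b K -> Lip g a b K.
Proof. intros E H s t h1 h2 h3. rewrite <- !E by lra. apply H; lra. Qed.

Lemma Lip_concat (f : R -> X) a b c K : Lip f a b K -> Lip f b c K -> Lip f a c K.
Proof.
  intros Hab Hbc s t h1 h2 h3.
  destruct (Rle_dec t b); [apply Hab; lra|].
  destruct (Rle_dec b s); [apply Hbc; lra|].
  pose proof (mdist_tri _ (f s) (f b) (f t)).
  pose proof (Hab s b ltac:(lra) ltac:(lra) (Rle_refl _)).
  pose proof (Hbc b t (Rle_refl _) ltac:(lra) ltac:(lra)).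
  lra.
Qed.

Definition join (f g : R -> X) (b t : R) : X := if Rle_dec t b then f t else g t.

Lemma Lip_join (f g : R -> X) a b c K :
  Lip f a b K -> Lip g b c K -> f b = g b -> Lip (join f g b) a c K.
Proof.
  intros Hf Hg E. apply Lip_concat with b.
  - apply Lip_ext with f; [|exact Hf].
    intros t Ht. unfold join. destruct (Rle_dec t b); [reflexivity | lra].
  - apply Lip_ext with g; [|exact Hg].
    intros t Ht. unfold join. destruct (Rle_dec t b); [|reflexivity].
    replace t with b by lra. symmetry; exact E.
Qed.

Lemma join_range (f g : R -> X) a b c (P : X -> Prop) :
  (forall t, a <= t <= b -> P (f t)) -> (forall t, b <= t <= c -> P (g t)) ->
  forall t, a <= t <= c -> P (join f g b t).
Proof.
  intros Hf Hg t Ht. unfold join. destruct (Rle_dec t b); [apply Hf | apply Hg]; lra.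
Qed.

Lemma Lip_affine (g : R -> X) a b K c e p q :
  Lip g a b K -> 0 <= c -> a <= c * (p - e) -> c * (q - e) <= b ->
  Lip (fun t => g (c * (t - e))) p q (K * c).
Proof.
  intros H Hc Ha Hb s t h1 h2 h3.
  assert (c * (p - e) <= c * (s - e)) by (apply Rmult_le_compat_l; lra).
  assert (c * (s - e) <= c * (t - e)) by (apply Rmult_le_compat_l; lra).
  assert (c * (t - e) <= c * (q - e)) by (apply Rmult_le_compat_l; lra).
  eapply Rle_trans; [apply H; lra | right; ring].
Qed.

Lemma Lip_reverse (g : R -> X) l K : Lip g 0 l K -> Lip (fun s => g (l - s)) 0 l K.
Proof.
  intros H s t h1 h2 h3. rewrite mdist_sym.
  eapply Rle_trans; [apply H; lra | right; ring].
Qed.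

Lemma Lip_continuous (f : R -> X) a b K :
  0 <= K -> Lip f a b K -> continuous_on_interval f a b.
Proof.
  intros HK H t Ht eps Heps. exists (eps / (K + 1)). split.
  { apply Rdiv_lt_0_compat; lra. }
  intros s Hs Hst.
  assert (Hd : mdist (f s) (f t) <= K * Rabs (s - t)).
  { destruct (Rle_dec s t).
    - rewrite Rabs_left1 by lra. replace (K * - (s - t)) with (K * (t - s)) by ring.
      apply H; lra.
    - rewrite Rabs_right by lra. rewrite mdist_sym. apply H; lra. }
  assert (K * Rabs (s - t) <= K * (eps / (K + 1))) by (apply Rmult_le_compat_l; lra).
  assert (K * (eps / (K + 1)) < eps).
  { apply (Rmult_lt_reg_r (K + 1)); [lra|]. field_simplify; lra. }
  lra.
Qed.

Lemma Lip_variation_le (f : R -> X) a b K :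
  0 <= K -> Lip f a b K ->
  forall ts t0, Sorted Rle (t0 :: ts) -> Forall (fun t => a <= t <= b) (t0 :: ts) ->
  variation f (t0 :: ts) <= K * (b - t0).
Proof.
  intros HK H ts. induction ts as [|t1 ts IH]; intros t0 HS HF.
  - simpl. inversion HF; subst. apply Rmult_le_pos; lra.
  - apply Sorted_inv in HS as [HS HR]. inversion HR; subst.
    inversion HF as [|? ? Ht0 HF1]; subst. inversion HF1 as [|? ? Ht1 HF2]; subst.
    change (variation f (t0 :: t1 :: ts))
      with (mdist (f t0) (f t1) + variation f (t1 :: ts)).
    specialize (IH t1 HS HF1).
    assert (mdist (f t0) (f t1) <= K * (t1 - t0)) by (apply H; lra).
    nra.
Qed.

Lemma Lip_has_length (f : R -> X) a b K :
  0 <= K -> a <= b -> Lip f a b K -> exists L, curve_length f a b L /\ L <= K * (b - a).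
Proof.
  intros HK Hab H.
  set (E := fun v => exists ts, Defs.partition a b ts /\ v = variation f ts).
  assert (Hub : is_upper_bound E (K * (b - a))).
  { intros v [ts [[HS HF] ->]]. destruct ts as [|t0 ts].
    - simpl. apply Rmult_le_pos; lra.
    - pose proof (Lip_variation_le f a b K HK H ts t0 HS HF).
      inversion HF; subst.
      assert (K * (b - t0) <= K * (b - a)) by (apply Rmult_le_compat_l; lra). lra. }
  destruct (completeness E) as [L HL].
  - exists (K * (b - a)); exact Hub.
  - exists 0, []. split; [split; constructor | reflexivity].
  - exists L. split; [exact HL | apply HL; exact Hub].
Qed.

(* An arc-length parametrized curve is 1-Lipschitz: a two-point partition is a lower bound for the length. *)
Lemma arclength_Lip (g : R -> X) l : arclength_param g l -> Lip g 0 l 1.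
Proof.
  intros H s t h1 h2 h3. destruct (H s t h1 h2 h3) as [Hub _].
  replace (mdist (g s) (g t)) with (variation g [s; t]) by (simpl; ring).
  rewrite Rmult_1_l. apply Hub. exists [s; t]. split; [|reflexivity]. split.
  - apply Sorted_cons; [apply Sorted_cons; constructor | constructor; exact h2].
  - repeat apply Forall_cons; [lra | lra | constructor].
Qed.

Lemma constant_path (x : X) :
  exists (g : R -> X) L, continuous_on_interval g 0 1 /\ (forall t, g t = x) /\
    curve_length g 0 1 L /\ L <= 0.
Proof.
  assert (HL : Lip (fun _ : R => x) 0 1 0).
  { intros s t _ _ _. rewrite mdist_refl. lra. }
  destruct (Lip_has_length _ 0 1 0 (Rle_refl _) ltac:(lra) HL) as [L [HLc HLb]].
  exists (fun _ => x), L.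
  split; [exact (Lip_continuous _ 0 1 0 (Rle_refl _) HL)|].
  split; [reflexivity|]. split; [exact HLc | lra].
Qed.

Definition rescale (g : R -> X) (l al be t : R) : X := g (l / (be - al) * (t - al)).

Lemma rescale_Lip (g : R -> X) l al be K :
  Lip g 0 l K -> 0 <= l -> al < be -> Lip (rescale g l al be) al be (K * (l / (be - al))).
Proof.
  intros H Hl Hab. apply Lip_affine with 0 l; [exact H | | |].
  - apply Rmult_le_pos; [lra | left; apply Rinv_0_lt_compat; lra].
  - rewrite Rminus_diag, Rmult_0_r. lra.
  - right. field. lra.
Qed.

Lemma rescale_left (g : R -> X) l al be : rescale g l al be al = g 0.
Proof. unfold rescale. rewrite Rminus_diag, Rmult_0_r. reflexivity. Qed.

Lemma rescale_right (g : R -> X) l al be : al < be -> rescale g l al be be = g l.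
Proof. intros Hab. unfold rescale. f_equal. field. lra. Qed.

Lemma rescale_range (g : R -> X) l al be (P : X -> Prop) :
  0 <= l -> al < be -> (forall u, 0 <= u <= l -> P (g u)) ->
  forall t, al <= t <= be -> P (rescale g l al be t).
Proof.
  intros Hl Hab H t Ht. apply H. unfold rescale.
  assert (Hc : 0 <= l / (be - al)) by (apply Rmult_le_pos; [lra | left; apply Rinv_0_lt_compat; lra]).
  split; [apply Rmult_le_pos; lra|].
  replace l with (l / (be - al) * (be - al)) at 2 by (field; lra).
  apply Rmult_le_compat_l; lra.
Qed.

(* The path on [0,1] running through Tx (reparametrized over [0,1/4]), then the
   arc-length curve gm of length l (over [1/4,3/4]), then Ty backwards (over
   [3/4,1]). *)
Lemma three_piece_path (Tx Ty gm : R -> X) eta l (P : X -> Prop) :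
  0 <= eta -> 0 <= l -> Lip Tx 0 1 eta -> Lip Ty 0 1 eta -> arclength_param gm l ->
  Tx 1 = gm 0 -> gm l = Ty 1 ->
  (forall u, 0 <= u <= 1 -> P (Tx u)) -> (forall u, 0 <= u <= l -> P (gm u)) ->
  (forall u, 0 <= u <= 1 -> P (Ty u)) ->
  exists (g : R -> X) L, continuous_on_interval g 0 1 /\ g 0 = Tx 0 /\ g 1 = Ty 0 /\
    (forall t, 0 <= t <= 1 -> P (g t)) /\ curve_length g 0 1 L /\ L <= 4 * eta + 2 * l.
Proof.
  intros He Hl HTx HTy Hgm E1 E2 PTx Pgm PTy.
  set (f1 := rescale Tx 1 0 (1 / 4)).
  set (f2 := rescale gm l (1 / 4) (3 / 4)).
  set (f3 := rescale (fun s => Ty (1 - s)) 1 (3 / 4) 1).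
  set (g := join (join f1 f2 (1 / 4)) f3 (3 / 4)).
  set (K := 4 * eta + 2 * l).
  assert (L1 : Lip f1 0 (1 / 4) K).
  { apply Lip_mono with (eta * (1 / (1 / 4 - 0))); [|apply rescale_Lip; [exact HTx | lra | lra]].
    replace (eta * (1 / (1 / 4 - 0))) with (4 * eta) by field. unfold K. lra. }
  assert (L2 : Lip f2 (1 / 4) (3 / 4) K).
  { apply Lip_mono with (1 * (l / (3 / 4 - 1 / 4))); [|apply rescale_Lip; [now apply arclength_Lip | lra | lra]].
    replace (1 * (l / (3 / 4 - 1 / 4))) with (2 * l) by field. unfold K. lra. }
  assert (L3 : Lip f3 (3 / 4) 1 K).
  { apply Lip_mono with (eta * (1 / (1 - 3 / 4))); [|apply rescale_Lip; [now apply Lip_reverse | lra | lra]].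
    replace (eta * (1 / (1 - 3 / 4))) with (4 * eta) by field. unfold K. lra. }
  assert (Lg : Lip g 0 1 K).
  { apply Lip_join; [apply Lip_join; [exact L1 | exact L2 |] | exact L3 |].
    - unfold f1, f2. rewrite rescale_right, rescale_left by lra. exact E1.
    - unfold join, f2, f3. destruct (Rle_dec (3 / 4) (1 / 4)); [lra|].
      rewrite rescale_right, rescale_left by lra.
      replace (1 - 0) with 1 by ring. exact E2. }
  destruct (Lip_has_length g 0 1 K ltac:(unfold K; lra) ltac:(lra) Lg) as [L [HLc HLb]].
  exists g, L. split; [exact (Lip_continuous g 0 1 K ltac:(unfold K; lra) Lg)|].
  split.
  { unfold g, join. destruct (Rle_dec 0 (3 / 4)); [|lra].
    destruct (Rle_dec 0 (1 / 4)); [|lra]. apply rescale_left. }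
  split.
  { unfold g, join. destruct (Rle_dec 1 (3 / 4)); [lra|].
    unfold f3. rewrite rescale_right by lra. f_equal. ring. }
  split; [|split; [exact HLc | lra]].
  apply join_range; [apply join_range|].
  - apply rescale_range; [lra | lra | exact PTx].
  - apply rescale_range; [lra | lra | exact Pgm].
  - apply rescale_range; [lra | lra |]. intros u Hu. apply PTy. lra.
Qed.

End Lipschitz.

Definition dyad (n : nat) : R := (/ 2) ^ n.

Lemma dyad_pos n : 0 < dyad n.
Proof. unfold dyad. apply pow_lt. lra. Qed.

Lemma dyad_S n : dyad (S n) = dyad n / 2.
Proof. unfold dyad. simpl. field. Qed.

Lemma dyad_le m n : (m <= n)%nat -> dyad n <= dyad m.
Proof. induction 1; [lra|]. rewrite dyad_S. pose proof (dyad_pos m0). lra. Qed.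

Lemma dyad_small c y : 0 < c -> 0 < y -> exists n, c * dyad n < y.
Proof.
  intros Hc Hy. destruct (pow_lt_1_zero (/ 2)) with (y := y / c) as [N HN].
  - rewrite Rabs_right; lra.
  - apply Rdiv_lt_0_compat; lra.
  - exists N. specialize (HN N (le_n _)).
    rewrite Rabs_right in HN by (apply Rle_ge, pow_le; lra).
    apply (Rmult_lt_compat_l c) in HN; [|lra].
    replace (c * (y / c)) with y in HN by (field; lra). exact HN.
Qed.

Lemma dyad_find t : 0 < t <= 1 -> exists n, dyad (S n) <= t <= dyad n.
Proof.
  intros Ht. destruct (dyad_small 1 t) as [N HN]; [lra | lra|].
  rewrite Rmult_1_l in HN. induction N as [|N IH].
  - unfold dyad in HN. simpl in HN. lra.
  - destruct (Rlt_dec (dyad N) t) as [H|H]; [exact (IH H)|].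
    exists N. lra.
Qed.

Lemma dyad_overlap k n t : (k < n)%nat ->
  dyad (S k) <= t <= dyad k -> dyad (S n) <= t <= dyad n -> n = S k /\ t = dyad n.
Proof.
  intros Hkn Hk Hn.
  destruct (Compare_dec.le_lt_dec (S (S k)) n) as [Hle|Hlt].
  - pose proof (dyad_le _ _ Hle). rewrite (dyad_S (S k)) in H.
    pose proof (dyad_pos (S k)). lra.
  - assert (n = S k) by lia. subst n. split; [reflexivity | lra].
Qed.

Section DyadicGlue.
Context {X : MetricSpace}.
Variables (x : X) (piece : nat -> R -> X) (K C : R).
Hypothesis K_nonneg : 0 <= K.
Hypothesis piece_Lip : forall n, Lip (piece n) (dyad (S n)) (dyad n) K.
Hypothesis piece_link : forall n, piece (S n) (dyad (S n)) = piece n (dyad (S n)).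
Hypothesis piece_conv : forall n, mdist x (piece n (dyad n)) <= C * dyad n.

Definition dyadic_glue (t : R) : X :=
  if Rle_dec t 0 then x
  else piece (epsilon (inhabits 0%nat) (fun k => dyad (S k) <= t <= dyad k)) t.

Lemma dyadic_glue_0 : dyadic_glue 0 = x.
Proof. unfold dyadic_glue. destruct (Rle_dec 0 0); [reflexivity | lra]. Qed.

Lemma dyadic_glue_piece n t : dyad (S n) <= t <= dyad n -> dyadic_glue t = piece n t.
Proof.
  intros Ht. unfold dyadic_glue. destruct (Rle_dec t 0).
  { pose proof (dyad_pos (S n)). lra. }
  pose proof (epsilon_spec (inhabits 0%nat) (fun k => dyad (S k) <= t <= dyad k)
                (ex_intro _ n Ht)) as Hm.
  revert Hm. generalize (epsilon (inhabits 0%nat) (fun k => dyad (S k) <= t <= dyad k)).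
  intros m Hm. destruct (Compare_dec.lt_eq_lt_dec m n) as [[Hlt|<-]|Hgt].
  - destruct (dyad_overlap m n t Hlt Hm Ht) as [-> ->]. symmetry. apply piece_link.
  - reflexivity.
  - destruct (dyad_overlap n m t Hgt Ht Hm) as [-> ->]. apply piece_link.
Qed.

Lemma dyadic_glue_Lip_from m : Lip dyadic_glue (dyad (S m)) 1 K.
Proof.
  induction m as [|m IH].
  - change 1 with (dyad 0). apply Lip_ext with (piece 0); [|apply piece_Lip].
    intros t Ht. symmetry. apply dyadic_glue_piece. exact Ht.
  - apply Lip_concat with (dyad (S m)); [|exact IH].
    apply Lip_ext with (piece (S m)); [|apply piece_Lip].
    intros t Ht. symmetry. apply dyadic_glue_piece. exact Ht.
Qed.

(* The Lipschitz bound extends to time 0 because the curve at times dyad m approaches x. *)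
Lemma dyadic_glue_Lip : Lip dyadic_glue 0 1 K.
Proof.
  assert (HC : 0 <= C).
  { pose proof (piece_conv 0) as H. pose proof (mdist_nonneg x (piece 0 (dyad 0))).
    change (dyad 0) with 1 in *. lra. }
  intros s t Hs Hst Ht.
  destruct (Rle_lt_dec s 0) as [Hs0|Hs0].
  2:{ destruct (dyad_small 1 s) as [m Hm]; [lra | lra|]. rewrite Rmult_1_l in Hm.
      apply (dyadic_glue_Lip_from m); try lra.
      pose proof (dyad_le m (S m) (Nat.le_succ_diag_r m)). lra. }
  replace s with 0 in * by lra. rewrite dyadic_glue_0.
  apply Rle_plus_epsilon. intros e He.
  destruct (Req_dec t 0) as [->|Ht0]; [rewrite dyadic_glue_0, mdist_refl; lra|].
  destruct (dyad_small (C + 1) (Rmin e t)) as [m Hm]; [lra | apply Rmin_pos; lra|].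
  rewrite Rmult_plus_distr_r, Rmult_1_l in Hm.
  pose proof (Rmin_l e t). pose proof (Rmin_r e t). pose proof (dyad_pos m).
  assert (0 <= C * dyad m) by (apply Rmult_le_pos; lra).
  assert (Hm' : dyad (S m) <= dyad m <= dyad m) by (rewrite dyad_S; lra).
  pose proof (piece_conv m) as Hx.
  rewrite <- (dyadic_glue_piece m (dyad m) Hm') in Hx.
  pose proof (dyadic_glue_Lip_from m (dyad m) t ltac:(lra) ltac:(lra) Ht).
  pose proof (mdist_tri _ x (dyadic_glue (dyad m)) (dyadic_glue t)).
  assert (K * (t - dyad m) <= K * (t - 0)) by (apply Rmult_le_compat_l; lra).
  nra.
Qed.

Lemma dyadic_glue_range (P : X -> Prop) :
  (forall n t, dyad (S n) <= t <= dyad n -> P (piece n t)) ->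
  forall t, 0 < t <= 1 -> P (dyadic_glue t).
Proof.
  intros H t Ht. destruct (dyad_find t Ht) as [n Hn].
  rewrite (dyadic_glue_piece n t Hn). apply H, Hn.
Qed.

End DyadicGlue.

Definition quasiconvex_curve {X : MetricSpace} (Om : X -> Prop) (A : R)
    (x y : X) (g : R -> X) (l : R) : Prop :=
  0 <= l /\ g 0 = x /\ g l = y /\ (forall t, 0 <= t <= l -> Om (g t)) /\
  arclength_param g l /\ l <= A * mdist x y.

Definition quasiconvex {X : MetricSpace} (Om : X -> Prop) (A : R) : Prop :=
  forall x y, Om x -> Om y -> exists g l, quasiconvex_curve Om A x y g l.

Lemma tail_curve {X : MetricSpace} (Om : X -> Prop) A (x : X) eta :
  0 < A -> dense Om -> quasiconvex Om A -> 0 < eta ->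
  exists T : R -> X, T 0 = x /\ Lip T 0 1 eta /\ (forall t, 0 < t <= 1 -> Om (T t)).
Proof.
  intros HA Hdense Hqc He.
  set (C := eta / (3 * A)).
  assert (HC : 0 < C) by (apply Rdiv_lt_0_compat; lra).
  destruct (choice (fun n p => Om p /\ mdist x p < C * dyad n)) as [p Hp].
  { intro n. apply Hdense. apply Rmult_lt_0_compat; [exact HC | apply dyad_pos]. }
  destruct (choice (fun n (gl : (R -> X) * R) =>
                      quasiconvex_curve Om A (p (S n)) (p n) (fst gl) (snd gl))) as [G HG].
  { intro n. destruct (Hqc (p (S n)) (p n) (proj1 (Hp _)) (proj1 (Hp _))) as [g [l Hgl]].
    exists (g, l). exact Hgl. }
  assert (Hgap : forall n, dyad (S n) < dyad n).
  { intro n. rewrite dyad_S. pose proof (dyad_pos n). lra. }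
  set (piece n := rescale (fst (G n)) (snd (G n)) (dyad (S n)) (dyad n)).
  (* The n-th curve is short: l_n <= A (d(p_(n+1), x) + d(x, p_n)) <= eta (dyad n - dyad (S n)). *)
  assert (Hlen : forall n, snd (G n) <= eta * (dyad n - dyad (S n))).
  { intro n. destruct (HG n) as (_ & _ & _ & _ & _ & Hl).
    pose proof (mdist_tri _ (p (S n)) x (p n)). rewrite (mdist_sym _ (p (S n)) x) in H.
    pose proof (proj2 (Hp (S n))). pose proof (proj2 (Hp n)). rewrite dyad_S in *.
    assert (A * mdist (p (S n)) (p n) <= A * (C * (dyad n / 2) + C * dyad n))
      by (apply Rmult_le_compat_l; lra).
    replace (A * (C * (dyad n / 2) + C * dyad n)) with (eta * (dyad n - dyad n / 2)) in H2
      by (unfold C; field; lra).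
    lra. }
  assert (Hlink : forall n, piece (S n) (dyad (S n)) = piece n (dyad (S n))).
  { intro n. unfold piece. rewrite rescale_left, rescale_right by apply Hgap.
    destruct (HG n) as (_ & -> & _). destruct (HG (S n)) as (_ & _ & -> & _). reflexivity. }
  exists (dyadic_glue x piece). split; [apply dyadic_glue_0|]. split.
  - apply dyadic_glue_Lip with (C := C); [lra | | exact Hlink |].
    + intro n. destruct (HG n) as (Hl & _ & _ & _ & Har & _).
      apply Lip_mono with (1 * (snd (G n) / (dyad n - dyad (S n)))).
      * rewrite Rmult_1_l. apply div_le_of_le_mul; [specialize (Hgap n); lra|].
        rewrite Rmult_comm. apply Hlen.
      * apply rescale_Lip; [now apply arclength_Lip | exact Hl | apply Hgap].
    + intro n. unfold piece. rewrite rescale_right by apply Hgap.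
      destruct (HG n) as (_ & _ & -> & _). left. apply Hp.
  - apply dyadic_glue_range; [exact Hlink|]. intros n t Ht.
    destruct (HG n) as (Hl & _ & _ & Hom & _).
    apply rescale_range; [exact Hl | apply Hgap | exact Hom | exact Ht].
Qed.

Section UniformDomain.
Context {X : MetricSpace}.

Lemma A_uniform_quasiconvex (Om : X -> Prop) A : A_uniform X Om A -> quasiconvex Om A.
Proof.
  intros [_ HU] x y Hx Hy.
  destruct (HU x y Hx Hy) as (g & l & H1 & H2 & H3 & H4 & H5 & H6 & _).
  exists g, l. unfold quasiconvex_curve. tauto.
Qed.

(* A >= 1: otherwise any two points of Om would be joined by a curve shorter than
   their distance, so Om would be a single point and hence complete. *)
Lemma A_uniform_ge1 (Om : X -> Prop) A : A_uniform X Om A -> 1 <= A.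
Proof.
  intros [[u [Hu [_ Hnc]]] HU].
  destruct (Rlt_le_dec A 1) as [HA|HA]; [exfalso | exact HA].
  assert (Hsingle : forall y, Om y -> y = u 0%nat).
  { intros y Hy.
    destruct (HU y (u 0%nat) Hy (Hu 0%nat)) as (g & l & Hl & Hg0 & Hgl & _ & Har & HlA & _).
    pose proof (arclength_Lip g l Har 0 l (Rle_refl _) Hl (Rle_refl _)) as Hd.
    rewrite Hg0, Hgl in Hd. pose proof (mdist_nonneg y (u 0%nat)).
    apply mdist_sep. nra. }
  apply Hnc. exists (u 0%nat). split; [apply Hu|].
  intros eps Heps. exists 0%nat. intros n _.
  rewrite (Hsingle (u n) (Hu n)), mdist_refl. exact Heps.
Qed.

Lemma annulus_widen (a z : X) A r :
  1 <= A -> 0 < r -> r / 2 <= mdist a z < 5 * r / 2 -> r / (4 * A) <= mdist a z < 4 * A * r.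
Proof.
  intros HA Hr Hz. split; [|nra].
  apply div_le_of_le_mul; [lra | nra].
Qed.

Lemma annulus_avoids_center (a z : X) rho : 0 < rho -> rho <= mdist a z -> z <> a.
Proof. intros Hrho Hz ->. rewrite mdist_refl in Hz. lra. Qed.

Lemma tail_in_annulus (a z : X) (T : R -> X) A r eta :
  1 <= A -> 0 < r -> r <= mdist a z < 2 * r -> eta <= r / 2 -> T 0 = z -> Lip T 0 1 eta ->
  forall u, 0 <= u <= 1 -> r / (4 * A) <= mdist a (T u) < 4 * A * r.
Proof.
  intros HA Hr Hz He HT0 HT u Hu.
  pose proof (HT 0 1 ltac:(lra) ltac:(lra) ltac:(lra)) as Hend.
  pose proof (mdist_nonneg (T 0) (T 1)).
  pose proof (HT 0 u ltac:(lra) ltac:(lra) ltac:(lra)) as Hzu. rewrite HT0 in Hzu.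
  assert (eta * (u - 0) <= eta) by nra.
  pose proof (mdist_tri _ a z (T u)). pose proof (mdist_tri _ a (T u) z).
  rewrite (mdist_sym _ (T u) z) in *.
  apply annulus_widen; lra.
Qed.

(* If u <= l - u, its distance D to a satisfies
   D >= u/A and D >= d(a,x0) - u >= r/2 - u, so D >= r/(2(1+A)) >= r/(4A)
   (symmetrically otherwise); and 2D <= d(a,x0) + d(a,y0) + l. *)
Lemma uniform_curve_in_annulus (a x0 y0 : X) (g : R -> X) l u A r :
  1 <= A -> 0 < r -> 0 <= u <= l -> Lip g 0 l 1 -> g 0 = x0 -> g l = y0 ->
  mdist (g u) a >= / A * Rmin u (l - u) ->
  r / 2 <= mdist a x0 -> r / 2 <= mdist a y0 -> mdist a x0 + mdist a y0 + l < 8 * A * r ->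
  r / (4 * A) <= mdist a (g u) < 4 * A * r.
Proof.
  intros HA Hr Hu Hg Hg0 Hgl Hbd Hx Hy Hsum.
  pose proof (Hg 0 u ltac:(lra) ltac:(lra) ltac:(lra)) as Hxu.
  pose proof (Hg u l ltac:(lra) ltac:(lra) ltac:(lra)) as Huy.
  rewrite Hg0 in Hxu. rewrite Hgl in Huy. rewrite mdist_sym in Hbd.
  pose proof (mdist_tri _ a x0 (g u)). pose proof (mdist_tri _ a y0 (g u)).
  pose proof (mdist_tri _ a (g u) x0). pose proof (mdist_tri _ a (g u) y0).
  rewrite (mdist_sym _ y0 (g u)), (mdist_sym _ (g u) x0) in *.
  set (D := mdist a (g u)) in *.
  assert (HD : Rmin u (l - u) <= A * D).
  { apply Rge_le in Hbd. apply (Rmult_le_compat_l A) in Hbd; [|lra].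
    replace (A * (/ A * Rmin u (l - u))) with (Rmin u (l - u)) in Hbd by (field; lra).
    exact Hbd. }
  split; [|lra].
  apply div_le_of_le_mul; [lra|].
  pose proof (mdist_nonneg a (g u)).
  destruct (Rle_dec u (l - u)).
  - rewrite Rmin_left in HD by lra. nra.
  - rewrite Rmin_right in HD by lra. nra.
Qed.

(* The tails have speed eta = min(d, 4r - d)/8, small enough for the
   estimates of the annulus and of the length. *)
Lemma annular_join (Om : X -> Prop) A (a x y : X) r :
  dense Om -> A_uniform X Om A -> ~ Om a -> 0 < r ->
  r <= mdist a x < 2 * r -> r <= mdist a y < 2 * r -> 0 < mdist x y ->
  exists (g : R -> X) L, continuous_on_interval g 0 1 /\ g 0 = x /\ g 1 = y /\
    (forall t, 0 <= t <= 1 -> r / (4 * A) <= mdist a (g t) < 4 * A * r) /\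
    curve_length g 0 1 L /\ L <= 4 * A * mdist x y.
Proof.
  intros Hdense Hunif ha Hr Hx Hy Hd.
  pose proof (A_uniform_ge1 _ _ Hunif) as HA.
  set (d := mdist x y) in *.
  assert (Hd4 : d < 4 * r).
  { pose proof (mdist_tri _ x a y). rewrite (mdist_sym _ x a) in H. unfold d. lra. }
  set (eta := Rmin (d / 8) ((4 * r - d) / 8)).
  assert (He0 : 0 < eta) by (apply Rmin_pos; lra).
  assert (He1 : eta <= d / 8) by apply Rmin_l.
  assert (He2 : eta <= (4 * r - d) / 8) by apply Rmin_r.
  destruct (tail_curve Om A x eta ltac:(lra) Hdense (A_uniform_quasiconvex _ _ Hunif) He0)
    as (Tx & Tx0 & TxL & TxO).
  destruct (tail_curve Om A y eta ltac:(lra) Hdense (A_uniform_quasiconvex _ _ Hunif) He0)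
    as (Ty & Ty0 & TyL & TyO).
  pose proof (TxL 0 1 ltac:(lra) ltac:(lra) ltac:(lra)) as Dx0. rewrite Tx0 in Dx0.
  pose proof (TyL 0 1 ltac:(lra) ltac:(lra) ltac:(lra)) as Dy0. rewrite Ty0 in Dy0.
  destruct (proj2 Hunif (Tx 1) (Ty 1) (TxO 1 ltac:(lra)) (TyO 1 ltac:(lra)))
    as (gm & l & Hl & Hg0 & Hgl & _ & Har & HlA & Hbd).
  assert (Hll : l <= A * d + 2 * (A * eta)).
  { pose proof (mdist_tri _ (Tx 1) x (Ty 1)). pose proof (mdist_tri _ x y (Ty 1)).
    rewrite (mdist_sym _ (Tx 1) x) in H. fold d in H0.
    assert (A * mdist (Tx 1) (Ty 1) <= A * (d + 2 * eta)) by (apply Rmult_le_compat_l; lra).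
    lra. }
  assert (HAe1 : A * eta <= A * (d / 8)) by (apply Rmult_le_compat_l; lra).
  assert (HAe2 : A * eta <= A * ((4 * r - d) / 8)) by (apply Rmult_le_compat_l; lra).
  destruct (three_piece_path Tx Ty gm eta l (fun z => r / (4 * A) <= mdist a z < 4 * A * r)
              ltac:(lra) Hl TxL TyL
              Har (eq_sym Hg0) Hgl)
    as (g & L & Hc & Hg0' & Hg1' & Hrange & HLc & HLb).
  - apply (tail_in_annulus a x Tx A r eta HA Hr Hx ltac:(lra) Tx0 TxL).
  - intros u Hu.
    pose proof (mdist_tri _ a x (Tx 1)). pose proof (mdist_tri _ a (Tx 1) x).
    pose proof (mdist_tri _ a y (Ty 1)). pose proof (mdist_tri _ a (Ty 1) y).
    rewrite (mdist_sym _ (Tx 1) x), (mdist_sym _ (Ty 1) y) in *.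
    apply (uniform_curve_in_annulus a (Tx 1) (Ty 1) gm l u A r HA Hr Hu
             (arclength_Lip _ _ Har) Hg0 Hgl (Hbd u Hu a ha)); nra.
  - apply (tail_in_annulus a y Ty A r eta HA Hr Hy ltac:(lra) Ty0 TyL).
  - exists g, L. rewrite Tx0 in Hg0'. rewrite Ty0 in Hg1'.
    do 5 (split; [assumption|]). nra.
Qed.

End UniformDomain.

Theorem lemma9p9 (X : MetricSpace) (Om : X -> Prop) (A : R)
  (hcompl : is_completion_of X Om) (hunif : A_uniform X Om A)
  (a : X) (ha : ~ Om a) :
  loc_ann_qc X (fun z => z <> a) a (4 * A).
Proof.
  destruct hcompl as [_ Hdense].
  pose proof (A_uniform_ge1 _ _ hunif) as HA.
  split; [lra|]. exists 1. split; [lra|].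
  intros r Hr _ x y _ _ Hx Hy.
  assert (Hrho : 0 < r / (4 * A)) by (apply Rdiv_lt_0_compat; lra).
  destruct (Req_dec (mdist x y) 0) as [Exy|Nxy].
  -
    apply mdist_sep in Exy. subst y.
    destruct (constant_path x) as (g & L & Hc & Hconst & HLc & HLb).
    assert (Hann : r / (4 * A) <= mdist a x < 4 * A * r) by (apply annulus_widen; lra).
    exists g, L. rewrite !Hconst, mdist_refl.
    split; [exact Hc|]. split; [reflexivity|]. split; [reflexivity|].
    split; [|split; [exact HLc | lra]].
    intros t _. rewrite Hconst. split; [exact (annulus_avoids_center a x _ Hrho (proj1 Hann)) | exact Hann].
  - destruct (annular_join Om A a x y r Hdense hunif ha Hr Hx Hy
                ltac:(pose proof (mdist_nonneg x y); lra))
      as (g & L & Hc & Hg0 & Hg1 & Hann & HLc & HLb).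
    exists g, L. do 3 (split; [assumption|]). split; [|split; assumption].
    intros t Ht. split; [|exact (Hann t Ht)].
    exact (annulus_avoids_center a (g t) _ Hrho (proj1 (Hann t Ht))).
Qed.
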